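(* Let $\mathbb{P}$ and $F_b$ be as in the context. For any $\varepsilon>0$ there exist $\delta=\delta(\varepsilon)>0$, independent of $\Lambda$, and an event $B_\varepsilon$ (in the variables $(J,\vec E)$) with $\mathbb{P}(B_\varepsilon)>1-\varepsilon$ such that on $B_\varepsilon$, $$\#\{b\in\Lambda^*:|F_b(J_\Lambda)|>\delta\}>(1-\varepsilon)|\Lambda^*|.$$
   Context: $\Lambda\subset\mathbb{Z}^d$ is a finite cube centred at the origin; $\Lambda^*$ its set of nearest-neighbour edges. Couplings $J=(J_e)$ on all nearest-neighbour edges of $\mathbb{Z}^d$ are i.i.d. standard Gaussian with law $\nu$; $J'$ an independent copy; $J_\Lambda=(J_e)_{e\in\Lambda^*}$, $J_{\Lambda^c}$ the rest. For spins $\eta$ and $e=\{x,y\}$, $\eta_e=\eta_x\eta_y$; $\mathcal S_\Lambda$ is the set of edge configurations on $\Lambda^*$ induced by spin configurations. $H_{\Lambda,J}(\eta)=-\sum_{e\in\Lambda^*}J_e\eta_e$. Metastate representation: for $B_n=[-n,n]^d\supset\Lambda$ and a fixed coupling-independent boundary condition, let $E_n(\eta,\eta')$ be the difference of the energies, from edges outside $\Lambda^*$, of the minimizers of the $B_n$ Hamiltonian constrained to equal $\eta$, resp. $\eta'$, on $\Lambda$. Along a subsequence the law of $(J,\vec E_n)$ converges weakly to that of some $(J,\vec E)$ with $E(\eta,\eta)=0$, $E(\eta,\eta'')=E(\eta,\eta')+E(\eta',\eta'')$ and $(J_{\Lambda^c},\vec E)$ independent of $J_\Lambda$; $\vec E$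 is regarded as indexed by $\mathcal S_\Lambda$; $\kappa_{J_{\Lambda^c}}(d\vec E)$ is the conditional law of $\vec E$ given $J$. Set $d\mathbb{P}=d\nu(J)\,d\nu(J')\,d\kappa_{J_{\Lambda^c}}(\vec E)$. Given $\vec E$, the critical set is $\mathcal C=\bigcup_{\eta\ne\eta'}\{J_\Lambda:\sum_eJ_e(\eta_e-\eta'_e)=E(\eta,\eta')\}$; for $J_\Lambda\notin\mathcal C$, $\eta\prec\eta'$ iff $E(\eta,\eta')+H_{\Lambda,J}(\eta)-H_{\Lambda,J}(\eta')<0$ (a strict total order), and $\sigma^{\pm,b}(J_\Lambda)$ is the $\prec$-minimal element among $\eta$ with $\eta_b=\pm1$. The flexibility of the edge $b$ is $F_b(J_\Lambda)=\big|-\sum_{e\in\Lambda^*}J_e(\sigma^{+,b}_e(J_\Lambda)-\sigma^{-,b}_e(J_\Lambda))+E(\sigma^{+,b}(J_\Lambda),\sigma^{-,b}(J_\Lambda))\big|$, extended continuously to all of $\mathbb{R}^{\Lambda^*}$. *)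

From HB Require Import structures.
From mathcomp Require Import all_boot all_order all_algebra.
From mathcomp Require Import all_classical all_reals all_analysis.
Set Implicit Arguments. Unset Strict Implicit. Unset Printing Implicit Defensive.
Import Order.TTheory GRing.Theory Num.Theory.
Local Open Scope classical_set_scope.
Local Open Scope ring_scope.

(* Sites of the cube Lambda = [-L, L]^d : coordinate i of x is (x i) - L. *)
Definition site (d L : nat) := {ffun 'I_d -> 'I_(2 * L + 1)}.

Definition adjb d L (x y : site d L) : bool :=
  [exists i : 'I_d, (((x i).+1 == y i :> nat) || ((y i).+1 == x i :> nat))
                    && [forall j : 'I_d, (j != i) ==> (x j == y j)]].

Definition edge d L :=
  {e : {set site d L} | [exists x, exists y, adjb x y && (e == finset.setU (finset.set1 x) (finset.set1 y))]}.

(* spin configurations on Lambda (true = +1) and edge configurations on Lambda^* *)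
Definition spin d L := {ffun site d L -> bool}.
Definition edgeconf d L := {ffun edge d L -> bool}.

(* eta_e = eta_x eta_y, encoded as a boolean (true = +1) *)
Definition induced d L (eta : spin d L) : edgeconf d L :=
  [ffun e : edge d L => [forall x in val e, forall y in val e, eta x == eta y]].

Definition SL d L := {c : edgeconf d L | [exists eta : spin d L, c == induced eta]}.

Definition sgnb {R : ringType} (b : bool) : R := if b then 1 else -1.

Definition ev {R : ringType} d L (s : SL d L) (e : edge d L) : R := sgnb (val s e).

Definition ham {R : ringType} d L (J : edge d L -> R) (s : SL d L) : R :=
  - \sum_(e : edge d L) J e * ev s e.

Definition cocycle {R : ringType} d L (E : SL d L -> SL d L -> R) : Prop :=
  (forall s, E s s = 0) /\ (forall s s' s'', E s s'' = E s s' + E s' s'').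

(* non-strict version of the order: eta "precedes or ties" eta' *)
Definition prec_le {R : realDomainType} d L (J : edge d L -> R)
  (E : SL d L -> SL d L -> R) (s s' : SL d L) : bool :=
  E s s' + ham J s - ham J s' <= 0.

Definition sigma {R : realDomainType} d L (J : edge d L -> R)
  (E : SL d L -> SL d L -> R) (b : edge d L) (pm : bool) : option (SL d L) :=
  [pick s : SL d L | (val s b == pm)
      && [forall s' : SL d L, (val s' b == pm) ==> prec_le J E s s']].

Definition flex {R : realDomainType} d L (J : edge d L -> R)
  (E : SL d L -> SL d L -> R) (b : edge d L) : R :=
  match sigma J E b true, sigma J E b false with
  | Some sp, Some sm =>
      `| - (\sum_(e : edge d L) J e * (ev sp e - ev sm e)) + E sp sm |
  | _, _ => 0
  end.

(* J_Lambda = (J_b)_b are mutually independent and jointly independent of E: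
   the product rule on the generating pi-system of measurable rectangles. *)
Definition indep_JE {R : realType} {dO : measure_display} {Omega : measurableType dO}
  (P : probability Omega R) d L (J : Omega -> edge d L -> R)
  (E : Omega -> SL d L -> SL d L -> R) : Prop :=
  forall (A : edge d L -> set R) (B : SL d L -> SL d L -> set R),
    (forall b, measurable (A b)) -> (forall s s', measurable (B s s')) ->
    P [set w | (forall b, A b (J w b)) /\ (forall s s', B s s' (E w s s'))] =
    ((\prod_(b : edge d L) P [set w | A b (J w b)])
       * P [set w | forall s s', B s s' (E w s s')])%E.

Definition nedges d L : nat := #|{: edge d L}|.

Definition nflex_gt {R : realDomainType} d L (delta : R) (J : edge d L -> R)
  (E : SL d L -> SL d L -> R) : nat :=
  #|[pred b : edge d L | delta < `| flex J E b |]|.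

From Pilot Require Import Defs.
From HB Require Import structures.
From mathcomp Require Import all_boot all_order all_algebra.
From mathcomp Require Import all_classical all_reals all_analysis.
From mathcomp Require Import measurable_realfun ring lra.
Import Order.TTheory GRing.Theory Num.Theory.
Local Open Scope classical_set_scope.
Local Open Scope ring_scope.
Set Implicit Arguments. Unset Strict Implicit. Unset Printing Implicit Defensive.

(* By the cocycle property, the flexibility of an edge [b] is [|g - 2 J_b|],
   where [g] is the difference between the minimal energies of the
   configurations with [s_b = +1] and with [s_b = -1], computed without the
   term of [b] and relative to [E(+, .)].  So [g] only depends on the couplings
   [J_e], [e <> b], and on the energies [E(+, s)], and it is Lipschitz in them.
   Outside an event of small probability all these finitely many variables lie
   in [[-M, M]], and there we cut their range into cells so small that [g]
   varies by at most [delta] on each of them.  Since [J_b] is a standard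
   Gaussian independent of the cell, it lies within [delta] of [g/2] with
   probability at most [2 delta] times the Gaussian peak.  Hence [|F_b| <= delta]
   only on an event of probability [O(delta)], uniformly in [b] and [Lambda],
   and Markov's inequality for the number of such edges yields [B_eps] when
   [delta] is of order [eps^2]. *)

Section configurations.
Variables d L : nat.

Definition SL_of_spin (eta : spin d L) : SL d L :=
  exist _ (Defs.induced eta) (introT existsP (ex_intro _ eta (eqxx (Defs.induced eta)))).

Definition SL_plus : SL d L := SL_of_spin [ffun=> true].

Lemma edge_ends (b : edge d L) : exists x y, x != y /\ val b = [set x; y]%SET.
Proof.
have /existsP [x /existsP [y /andP [/existsP [i /andP [xy _]] /eqP eb]]] := valP b.
exists x, y; split=> //; apply: contraTneq xy => <-.
by rewrite orbb eqn_leq ltnn.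
Qed.

Lemma SL_exists_sign (b : edge d L) (pm : bool) : exists s : SL d L, val s b == pm.
Proof.
have [x [y [xy eb]]] := edge_ends b.
have sign_agree (eta : spin d L) : val (SL_of_spin eta) b = (eta x == eta y).
  rewrite /= /Defs.induced ffunE eb.
  apply/idP/idP => [/forall_inP/(_ x (set21 _ _))/forall_inP/(_ y (set22 _ _)) //|].
  move=> /eqP exy; apply/forall_inP => u /set2P [] ->;
    by apply/forall_inP => v /set2P [] ->; rewrite ?exy.
case: pm.
  by exists SL_plus; rewrite sign_agree !ffunE.
exists (SL_of_spin [ffun z => z == x]).
by rewrite sign_agree !ffunE eqxx [y == x]eq_sym (negbTE xy).
Qed.

End configurations.

Lemma arg_min_lipschitz (T : finType) (R : realDomainType) (P : pred T) (i0 : T)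
    (f g : T -> R) (k : R) :
  P i0 -> (forall i, `|f i - g i| <= k) ->
  `|f [arg min_(i < i0 | P i) f i]%O - g [arg min_(i < i0 | P i) g i]%O| <= k.
Proof.
move=> Pi0 fg.
case: arg_minP => // i Pi fi; case: arg_minP => // j Pj gj.
have := fg i; have := fg j; have := fi j Pj; have := gj i Pi.
rewrite !ler_norml => ? ? /andP [? ?] /andP [? ?]; apply/andP; split; lra.
Qed.

Section flexibility.
Variables (R : realDomainType) (d L : nat) (J : edge d L -> R)
  (E : SL d L -> SL d L -> R) (b : edge d L).

Definition reduced_energy (s : SL d L) : R :=
  - (\sum_(e | e != b) J e * ev s e) - E (SL_plus d L) s.

Definition min_reduced_energy (pm : bool) : R :=
  reduced_energy [arg min_(s < xchoose (SL_exists_sign b pm) | val s b == pm)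
                   reduced_energy s]%O.

Definition reduced_gap : R := min_reduced_energy true - min_reduced_energy false.

Lemma min_reduced_energyP pm :
  (forall s : SL d L, val s b == pm -> min_reduced_energy pm <= reduced_energy s) /\
  exists2 s : SL d L, val s b == pm & reduced_energy s = min_reduced_energy pm.
Proof.
rewrite /min_reduced_energy.
by case: (arg_minP _ (xchooseP (SL_exists_sign b pm))) => s sb smin; split; last exists s.
Qed.

Lemma ham_split (s : SL d L) (pm : bool) : val s b == pm ->
  ham J s - E (SL_plus d L) s = - (J b * sgnb pm) + reduced_energy s.
Proof.
by move=> /eqP sb; rewrite /ham (bigD1 b) //= /ev sb opprD addrA.
Qed.

Hypothesis cocycleE : cocycle E.

Lemma cocycle_via_plus (s s' : SL d L) :
  E s s' = E (SL_plus d L) s' - E (SL_plus d L) s.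
Proof. by rewrite (proj2 cocycleE (SL_plus d L) s s') addrC addKr. Qed.

Lemma prec_leE (s s' : SL d L) : prec_le J E s s' =
  (ham J s - E (SL_plus d L) s <= ham J s' - E (SL_plus d L) s').
Proof. by rewrite /prec_le cocycle_via_plus; apply/idP/idP => ?; lra. Qed.

Lemma sigma_min_reduced_energy pm : exists s : SL d L,
  [/\ sigma J E b pm = Some s, val s b == pm & reduced_energy s = min_reduced_energy pm].
Proof.
have [minle [s0 s0b s0min]] := min_reduced_energyP pm.
rewrite /sigma; case: pickP => [s /andP [sb /forallP smin]|nomin].
  exists s; split=> //; apply/le_anti; rewrite minle //= andbT -s0min.
  by have := smin s0; rewrite s0b /= prec_leE (ham_split sb) (ham_split s0b) lerD2l.
suff s0le : [forall s' : SL d L, (val s' b == pm) ==> prec_le J E s0 s'].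
  by have := nomin s0; rewrite s0b s0le.
apply/forallP => s'; apply/implyP => s'b.
by rewrite prec_leE (ham_split s0b) (ham_split s'b) lerD2l s0min minle.
Qed.

Lemma flexE : flex J E b = `|reduced_gap - 2 * J b|.
Proof.
have [sp [sigp spb spmin]] := sigma_min_reduced_energy true.
have [sm [sigm smb smmin]] := sigma_min_reduced_energy false.
rewrite /flex sigp sigm.
have := ham_split spb; have := ham_split smb.
have -> : \sum_e J e * (ev sp e - ev sm e) = - ham J sp + ham J sm.
  by rewrite /ham opprK -sumrB; apply: eq_bigr => e _; rewrite mulrBr.
rewrite (cocycle_via_plus sp sm) /reduced_gap -spmin -smmin /= mulr1 mulrN1.
move=> /eqP; rewrite subr_eq => /eqP -> /eqP; rewrite subr_eq => /eqP ->.
by congr `|_|; ring.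
Qed.

End flexibility.

Section gap_continuity.
Variables (R : realDomainType) (d L : nat) (J J' : edge d L -> R)
  (E E' : SL d L -> SL d L -> R) (b : edge d L).

Lemma reduced_energy_dist (s : SL d L) :
  `|reduced_energy J E b s - reduced_energy J' E' b s| <=
  \sum_(e | e != b) `|J e - J' e| + `|E (SL_plus d L) s - E' (SL_plus d L) s|.
Proof.
have -> : reduced_energy J E b s - reduced_energy J' E' b s =
    - (\sum_(e | e != b) (J e - J' e) * ev s e)
    - (E (SL_plus d L) s - E' (SL_plus d L) s).
  rewrite /reduced_energy (eq_bigr _ (fun e _ => mulrBl (ev s e) (J e) (J' e))).
  by rewrite sumrB; ring.
apply: le_trans (ler_normB _ _) _; rewrite normrN lerD2r.
apply: le_trans (ler_norm_sum _ _ _) (ler_sum _ _) => e _.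
by rewrite normrM /ev; case: (val s e); rewrite /= ?normrN normr1 mulr1.
Qed.

Lemma reduced_gap_lipschitz (k : R) :
  (forall s, `|reduced_energy J E b s - reduced_energy J' E' b s| <= k) ->
  `|reduced_gap J E b - reduced_gap J' E' b| <= 2 * k.
Proof.
move=> Vk; have min_dist pm :
    `|min_reduced_energy J E b pm - min_reduced_energy J' E' b pm| <= k.
  exact: (arg_min_lipschitz (xchooseP (SL_exists_sign b pm)) Vk).
have := min_dist true; have := min_dist false; rewrite /reduced_gap !ler_norml.
by move=> /andP [? ?] /andP [? ?]; apply/andP; split; lra.
Qed.

End gap_continuity.

Section probability.
Variables (dO : measure_display) (Omega : measurableType dO) (R : realType)
  (P : probability Omega R).

Definition pr (A : set Omega) : R := fine (P A).

Lemma prE A : measurable A -> P A = (pr A)%:E.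
Proof.
move=> mA; rewrite /pr fineK // ge0_fin_numE ?measure_ge0 //.
by apply: le_lt_trans (probability_le1 P mA) _; rewrite ltry.
Qed.

Lemma pr_ge0 A : 0 <= pr A.
Proof. exact/fine_ge0/measure_ge0. Qed.

Lemma pr_le1 A : measurable A -> pr A <= 1.
Proof. by move=> mA; have := probability_le1 P mA; rewrite prE // lee_fin. Qed.

Lemma prC A : measurable A -> pr (~` A) = 1 - pr A.
Proof.
move=> mA; apply/EFin_inj; rewrite -prE; last exact: measurableC.
by rewrite probability_setC // prE.
Qed.

Lemma prU2 A B : measurable A -> measurable B -> pr (A `|` B) <= pr A + pr B.
Proof.
move=> mA mB; rewrite -lee_fin EFinD -!prE //; last exact: measurableU.
exact: measureU2.
Qed.

Lemma pr_bigsetU_disjoint (I : finType) (p : pred I) (F : I -> set Omega) :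
  (forall i, measurable (F i)) ->
  {in p &, forall i j, i != j -> F i `&` F j = set0} ->
  pr (\big[setU/set0]_(i | p i) F i) = \sum_(i | p i) pr (F i).
Proof.
move=> mF dF; elim: (index_enum I) (index_enum_uniq I) => [|i r IH].
  by rewrite !big_nil /pr measure0.
move=> /= /andP [ir ur]; rewrite !big_cons; case: ifP => pi; last exact: IH.
have mU : measurable (\big[setU/set0]_(j <- r | p j) F j).
  by apply: bigsetU_measurable => j _.
apply/EFin_inj; rewrite EFinD -IH // -!prE //; last exact: measurableU.
rewrite measureU //; apply/seteqP; split => // w [Fiw].
rewrite -bigcup_seq_cond => -[j /andP [jr pj] Fjw].
have ij : i != j by apply: contraNneq ir => ->.
by rewrite -(dF i j pi pj ij).
Qed.

Lemma measurable_forall (I : finType) (F : I -> set Omega) :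
  (forall i, measurable (F i)) -> measurable [set w | forall i, F i w].
Proof.
move=> mF; have -> : [set w | forall i, F i w] = \bigcap_(i in setT) F i.
  by apply/seteqP; split => w /= Fw i //; apply: Fw.
by apply: fin_bigcap_measurable => //; exact: finite_finset.
Qed.

Lemma measurable_preimage (X : Omega -> R) (A : set R) :
  measurable_fun setT X -> measurable A -> measurable [set w | A (X w)].
Proof. by move=> mX mA; rewrite -[X in measurable X]setTI; exact: mX. Qed.

Lemma measurable_norm_lt (X : Omega -> R) (M : R) :
  measurable_fun setT X -> measurable [set w | `|X w| < M].
Proof.
move=> mX; have -> : [set w | `|X w| < M] = [set w | `]-M, M[%classic (X w)].
  by apply/seteqP; split => w /=; rewrite in_itv ltr_norml.
exact: measurable_preimage mX (measurable_itv _).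
Qed.

Lemma tail_bound (I : finType) (X : I -> Omega -> R) (tau : R) :
  (forall i, measurable_fun setT (X i)) -> 0 < tau ->
  exists M, 0 < M /\ pr (~` [set w | forall i, `|X i w| < M]) <= tau.
Proof.
move=> mX tau0.
pose F n := ~` [set w | forall i, `|X i w| < n.+1%:R].
have mF n : measurable (F n).
  by apply/measurableC/measurable_forall => i; exact: measurable_norm_lt.
have F_noninc : {homo F : n m / (n <= m)%N >-> (m <= n)%O}.
  move=> n m nm; apply/subsetPset => w /= Fm Fn; apply: Fm => i.
  by apply: lt_le_trans (Fn i) _; rewrite ler_nat ltnS.
have F_cap : \bigcap_n F n = set0.
  apply/seteqP; split => // w /(_ (Num.truncn (\sum_i `|X i w|)) Logic.I); apply => i.
  apply: le_lt_trans (truncnS_gt _); rewrite (bigD1 i) //= lerDl.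
  exact: sumr_ge0.
have := nonincreasing_cvg_mu (mu := P) _ mF _ F_noninc; rewrite F_cap measure0.
case/(_ _ _)/fine_cvgP => //.
  by apply: le_lt_trans (probability_le1 P (mF 0%N)) _; rewrite ltry.
move=> _ /cvgr_dist_lt /(_ tau tau0) [N _ FN].
exists N.+1%:R; split => //.
by have := FN N (leqnn N); rewrite /= sub0r normrN ger0_norm ?fine_ge0 // => /ltW.
Qed.

Lemma pr_partition_near (K : finType) (Q : K -> set Omega) (Y : Omega -> R)
    (c : K -> R) (r q : R) :
  (forall k, measurable (Q k)) -> (forall k l, k != l -> Q k `&` Q l = set0) ->
  measurable_fun setT Y ->
  (forall k A, measurable A ->
    pr (Q k `&` [set w | A (Y w)]) = pr (Q k) * pr [set w | A (Y w)]) ->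
  (forall a, pr [set w | `[a - r, a + r]%classic (Y w)] <= q) ->
  pr (\big[setU/set0]_k (Q k `&` [set w | `[c k - r, c k + r]%classic (Y w)])) <= q.
Proof.
move=> mQ dQ mY indepQY near_q.
have mnear a : measurable [set w | `[a - r, a + r]%classic (Y w)].
  exact: measurable_preimage mY (measurable_itv _).
have q0 : 0 <= q := le_trans (pr_ge0 _) (near_q 0).
rewrite pr_bigsetU_disjoint; first last.
- move=> k l _ _ kl; apply/seteqP; split => // w [[Qkw _] [Qlw _]].
  by rewrite -(dQ k l kl).
- by move=> k; apply: measurableI.
under eq_bigr => k _ do rewrite indepQY ?measurable_itv //.
apply: le_trans (_ : \sum_k pr (Q k) * q <= _).
  by apply: ler_sum => k _; rewrite ler_wpM2l ?pr_ge0.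
rewrite -mulr_suml -pr_bigsetU_disjoint //; last by move=> k l _ _; exact: dQ.
by apply: ler_piMl => //; apply/pr_le1/bigsetU_measurable => k _.
Qed.

Section counting.
Variables (I : finType) (C : I -> set Omega).
Hypothesis mC : forall i, measurable (C i).

Definition count_occurring (w : Omega) : R := \sum_i \1_(C i) w.

Lemma count_occurringE w : count_occurring w = #|[pred i | w \in C i]|%:R.
Proof.
rewrite /count_occurring -sum1_card natr_sum [in RHS]big_mkcond /=.
by apply: eq_bigr => i _; rewrite indicE inE; case: (w \in C i).
Qed.

Lemma measurable_count_occurring : measurable_fun setT count_occurring.
Proof. by apply: measurable_sum => i; exact: measurable_indic. Qed.

Lemma measurable_count_ge (t : R) : measurable [set w | t <= count_occurring w].
Proof.
have := measurable_preimage measurable_count_occurring (measurable_itv `[t, +oo[).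
by congr measurable; apply/seteqP; split => w /=; rewrite in_itv andbT.
Qed.

Lemma markov_count (t : R) : 0 <= t ->
  (t%:E * P [set w | (t <= count_occurring w)%R] <= \sum_i P (C i))%E.
Proof.
move=> t0; have mB := measurable_count_ge t.
set B := [set w | _]; rewrite -(setIT B) -integral_indic //.
rewrite -ge0_integralZl_EFin //; last exact/measurable_EFinP/measurable_indic.
apply: (@le_trans _ _ (\int[P]_w (count_occurring w)%:E)%E).
  apply: ge0_le_integral => //.
  - by move=> w _; rewrite lee_fin mulr_ge0.
  - exact/measurable_EFinP/measurable_funM/measurable_indic.
  - exact/measurable_EFinP/measurable_count_occurring.
  - move=> w _; rewrite lee_fin indicE.
    by have [/set_mem|_] := boolP (w \in B); rewrite ?mulr1 // mulr0; apply: sumr_ge0.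
under eq_integral => w _ do rewrite /count_occurring -sumEFin.
rewrite ge0_integral_sum //; last by move=> i; exact/measurable_EFinP/measurable_indic.
by apply: lee_sum => i _; rewrite integral_indic // setIT.
Qed.

Lemma few_occur_whp (eps q : R) :
  (0 < #|I|)%N -> 0 < eps -> (forall i, pr (C i) <= q) -> q < eps ^+ 2 ->
  exists B, [/\ measurable B, ((1 - eps)%:E < P B)%E &
    forall w, B w -> (1 - eps) * #|I|%:R < #|[pred i | w \notin C i]|%:R].
Proof.
move=> I0 eps0 Cq q_lt; set n : R := #|I|%:R; set t := eps * n.
have t0 : 0 < t by rewrite mulr_gt0 // ltr0n.
have mBc := measurable_count_ge t.
have Bc_lt : pr [set w | t <= count_occurring w] < eps.
  have := markov_count (ltW t0); rewrite prE //.
  under eq_bigr => i _ do rewrite prE //.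
  rewrite sumEFin -EFinM lee_fin => markov.
  rewrite -(ltr_pM2l t0); apply: le_lt_trans markov _.
  apply: le_lt_trans (_ : n * q < _).
    by rewrite /n mulr_natl -sumr_const; apply: ler_sum.
  by rewrite /t [eps * n]mulrC -mulrA ltr_pM2l ?ltr0n // -expr2.
exists (~` [set w | t <= count_occurring w]); split.
- exact: measurableC.
- rewrite prE; last exact: measurableC.
  by rewrite prC // lte_fin; lra.
move=> w /negP; rewrite -ltNge count_occurringE /t => count_lt.
have -> : #|[pred i | w \notin C i]| = (#|I| - #|[pred i | w \in C i]|)%N.
  by rewrite -(cardC [pred i | w \in C i]) addKn; apply: eq_card.
by rewrite natrB ?max_card // /n in count_lt *; lra.
Qed.

End counting.

End probability.

Lemma normal_prob_itv_le (R : realType) (a r : R) : 0 <= r ->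
  (normal_prob 0 1 `[(a - r)%R, (a + r)%R]%classic <= (normal_peak 1 * (2 * r))%:E)%E.
Proof.
move=> r0; rewrite /normal_prob.
apply: (@le_trans _ _ (\int[lebesgue_measure]_(x in `[(a - r)%R, (a + r)%R]%classic)
                        (normal_peak (1 : R))%:E)%E).
  apply: ge0_le_integral => //=.
  - by move=> x _; rewrite lee_fin normal_pdf_ge0.
  - by apply/measurable_EFinP/measurable_funTS; exact: measurable_normal_pdf.
  - by move=> x _; rewrite lee_fin normal_pdf_ub ?oner_neq0.
rewrite integral_cst //= lebesgue_measure_itv /= lte_fin.
case: ifP => _; last by rewrite mule0 lee_fin mulr_ge0 ?normal_peak_ge0 ?mulr_ge0.
by rewrite -EFinB -EFinM lee_fin ler_wpM2l ?normal_peak_ge0 //; lra.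
Qed.

Lemma small_mesh (R : realFieldType) (n delta : R) : 0 <= n -> 0 < delta ->
  exists2 eta, 0 < eta & 2 * (n * eta) <= delta.
Proof.
move=> n0 delta0; exists (delta / (2 * (n + 1))); first by rewrite divr_gt0 // mulr_gt0 //; lra.
have -> : 2 * (n * (delta / (2 * (n + 1)))) = delta * (n / (n + 1)).
  by field; rewrite gt_eqF //; lra.
by apply: ler_piMr; [exact: ltW | rewrite ler_pdivrMr ?mul1r; lra].
Qed.

Lemma grid_size (R : archiRealFieldType) (M eta : R) : 0 < eta ->
  exists N : nat, 2 * M <= N%:R * eta.
Proof.
move=> eta0; exists (Num.truncn (2 * M / eta)).+1.
by rewrite -ler_pdivrMr //; apply/ltW/truncnS_gt.
Qed.

Lemma center_half_itv (R : realFieldType) (g c j delta : R) :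
  `|g - c| <= delta -> `|g - 2 * j| <= delta -> c / 2 - delta <= j <= c / 2 + delta.
Proof. by rewrite !ler_norml => /andP [? ?] /andP [? ?]; apply/andP; split; lra. Qed.

Section grid.
Variables (R : realType) (M eta : R) (N : nat).
Hypothesis eta0 : 0 < eta.

Definition bin (k : nat) : set R :=
  [set x | - M + k%:R * eta <= x < - M + k.+1%:R * eta].

Lemma measurable_bin k : measurable (bin k).
Proof.
have -> : bin k = `[- M + k%:R * eta, - M + k.+1%:R * eta[%classic.
  by apply/seteqP; split => x /=; rewrite in_itv.
exact: measurable_itv.
Qed.

Lemma bin_inj (i j : nat) (x : R) : bin i x -> bin j x -> i = j.
Proof.
rewrite /bin /= => /andP [? ?] /andP [? ?].
have : i%:R * eta < j.+1%:R * eta /\ j%:R * eta < i.+1%:R * eta by split; lra.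
by rewrite !ltr_pM2r // !ltr_nat !ltnS => -[? ?]; apply/eqP; rewrite eqn_leq; apply/andP.
Qed.

Lemma bin_dist (k : nat) (x y : R) : bin k x -> bin k y -> `|x - y| < eta.
Proof.
rewrite /bin /= -addn1 natrD mulrDl mul1r => /andP [? ?] /andP [? ?].
by rewrite ltr_norml; apply/andP; split; lra.
Qed.

Definition bin_of (x : R) : 'I_N.+1 := inord (Num.truncn ((x + M) / eta)).

Lemma bin_ofP (x : R) : 2 * M <= N%:R * eta -> `|x| < M -> bin (bin_of x) x.
Proof.
rewrite ltr_norml => MN /andP [xlo xhi].
have y0 : 0 <= (x + M) / eta by apply: divr_ge0 _ (ltW eta0); lra.
have /andP [t1 t2] := truncn_itv y0.
have tN : (Num.truncn ((x + M) / eta) < N.+1)%N.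
  by rewrite ltnS -(ler_nat R); apply: le_trans t1 _; rewrite ler_pdivrMr //; lra.
move: t1 t2; rewrite /bin /bin_of /= inordK // ler_pdivlMr // ltr_pdivrMr // => ? ?.
by apply/andP; split; lra.
Qed.

End grid.

Section model.
Variables (R : realType) (d L : nat) (dO : measure_display) (Omega : measurableType dO)
  (P : probability Omega R) (J : Omega -> edge d L -> R)
  (E : Omega -> SL d L -> SL d L -> R).
Hypothesis mJ : forall b, measurable_fun setT (fun w => J w b).
Hypothesis mE : forall s s', measurable_fun setT (fun w => E w s s').
Hypothesis indepJE : indep_JE P J E.

(* By the cocycle property, [J] and the energies [E(+, s)] determine [E]. *)
Definition coord (i : edge d L + SL d L) (w : Omega) : R :=
  match i with inl e => J w e | inr s => E w (SL_plus d L) s end.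

Lemma measurable_coord i : measurable_fun setT (coord i).
Proof. by case: i => [e|s]; [exact: mJ | exact: mE]. Qed.

Lemma indep_coord_rect (B : edge d L + SL d L -> set R) :
  (forall i, measurable (B i)) ->
  P [set w | forall i, B i (coord i w)] =
  (\prod_e P [set w | B (inl e) (J w e)] *
   P [set w | forall s, B (inr s) (E w (SL_plus d L) s)])%E.
Proof.
move=> mB.
pose BE s s' := if s == SL_plus d L then B (inr s') else setT.
have mBE s s' : measurable (BE s s') by rewrite /BE; case: ifP.
have EE : [set w | forall s s', BE s s' (E w s s')] =
          [set w | forall s, B (inr s) (E w (SL_plus d L) s)].
  apply/seteqP; split => w /= Bw => [s|s s']; last by rewrite /BE; case: eqP => // ->.
  by have := Bw (SL_plus d L) s; rewrite /BE eqxx.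
rewrite -EE -(indepJE (fun e => mB (inl e)) mBE); congr (P _).
apply/seteqP; split => w /= Bw.
  split => [e|s s']; first exact: Bw (inl e).
  by rewrite /BE; case: eqP => // ->; exact: Bw (inr s').
case: Bw => BJ BEw [e|s] //.
by have := BEw (SL_plus d L) s; rewrite /BE eqxx.
Qed.

Local Notation other_coord b := {i in predC1 (inl b : edge d L + SL d L)}.

Lemma measurable_other_rect b (B : other_coord b -> set R) :
  (forall i, measurable (B i)) ->
  measurable [set w | forall i : other_coord b, B i (coord (val i) w)].
Proof.
move=> mB; apply: measurable_forall => i.
exact: measurable_preimage (measurable_coord _) (mB i).
Qed.

Lemma pr_coupling_indep b (A : set R) (B : other_coord b -> set R) :
  measurable A -> (forall i, measurable (B i)) ->
  pr P ([set w | forall i : other_coord b, B i (coord (val i) w)] `&` [set w | A (J w b)])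
  = pr P [set w | forall i : other_coord b, B i (coord (val i) w)]
    * pr P [set w | A (J w b)].
Proof.
move=> mA mB.
pose B' i := if insub i is Some i' then B i' else setT.
pose ext (A' : set R) i := if i == inl b then A' else B' i.
have mext A' : measurable A' -> forall i, measurable (ext A' i).
  by move=> mA' i; rewrite /ext /B'; case: eqP => // _; case: insubP.
have extE A' : [set w | forall i, ext A' i (coord i w)] =
    [set w | forall i : other_coord b, B i (coord (val i) w)] `&` [set w | A' (J w b)].
  apply/seteqP; split => w /= extw.
    split => [i|]; last by have := extw (inl b); rewrite /ext eqxx.
    by have := extw (val i); rewrite /ext (negbTE (valP i)) /B' valK.
  move=> i; rewrite /ext; case: eqP => [->|/eqP ib]; first exact: extw.2.
  by rewrite /B' insubT; exact: extw.1.
have mrect := measurable_other_rect mB.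
have mJb := measurable_preimage (mJ b) mA.
apply/EFin_inj; rewrite EFinM -!prE //; last exact: measurableI.
rewrite -extE; have -> : [set w | forall i : other_coord b, B i (coord (val i) w)] =
    [set w | forall i, ext setT i (coord i w)].
  by rewrite extE; apply/seteqP; split => w // [].
rewrite (indep_coord_rect (mext _ mA)) (indep_coord_rect (mext _ measurableT)).
rewrite (bigD1 b) //= [in RHS](bigD1 b) //=.
rewrite /ext /= !eqxx (_ : [set w | setT (J w b)] = setT) // probability_setT mul1e.
have prodE A' : (\prod_(e | e != b)
    P [set w | (if inl e == inl b then A' else B' (inl e)) (J w e)] =
    \prod_(e | e != b) P [set w | B' (inl e) (J w e)])%E.
  by apply: eq_bigr => e eb; rewrite ifF //; exact/negbTE.
by rewrite !prodE [RHS]muleC muleA.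
Qed.

Section cells.
Variables (b : edge d L) (M eta : R) (N : nat).
Hypothesis eta0 : 0 < eta.

Definition cell (k : {ffun other_coord b -> 'I_N.+1}) : set Omega :=
  [set w | forall i, bin M eta (k i) (coord (val i) w)].

Lemma measurable_cell k : measurable (cell k).
Proof. exact: measurable_other_rect (fun i => measurable_bin _ _ _). Qed.

Lemma cell_disjoint k l : k != l -> cell k `&` cell l = set0.
Proof.
move=> kl; apply/seteqP; split => // w [kw lw]; apply: (negP kl).
by apply/eqP/ffunP => i; apply/val_inj/(bin_inj eta0 (kw i) (lw i)).
Qed.

Lemma cell_cover w : 2 * M <= N%:R * eta -> (forall i, `|coord i w| < M) ->
  cell [ffun i => bin_of M eta N (coord (val i) w)] w.
Proof. by move=> MN wM i; rewrite ffunE; apply: bin_ofP. Qed.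

Lemma reduced_energy_cell_dist k w w' s : cell k w -> cell k w' ->
  `|reduced_energy (J w) (E w) b s - reduced_energy (J w') (E w') b s| <=
  #|{: other_coord b}|%:R * eta.
Proof.
move=> kw kw'; apply: le_trans (reduced_energy_dist _ _ _ _ _ _) _.
apply: le_trans (_ : _ <= \sum_(i : other_coord b) `|coord (val i) w - coord (val i) w'|) _.
  rewrite -(big_sub _ (fun i => `|coord i w - coord i w'|)) /=.
  rewrite big_sumType /=; apply: lerD.
    by rewrite [X in _ <= X](eq_bigl (fun e => e != b)) // => e; rewrite !inE.
  by rewrite (bigD1 s) //= lerDl; apply: sumr_ge0.
rewrite mulr_natl -sumr_const; apply: ler_sum => i _.
exact/ltW/(bin_dist (kw i) (kw' i)).
Qed.

Lemma cell_gap_center k : exists c, forall w, cell k w ->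
  `|reduced_gap (J w) (E w) b - c| <= 2 * (#|{: other_coord b}|%:R * eta).
Proof.
have [[w0 kw0]|nocell] := pselect (exists w0, cell k w0); last first.
  by exists 0 => w kw; case: nocell; exists w.
exists (reduced_gap (J w0) (E w0) b) => w kw.
by apply: reduced_gap_lipschitz => s; exact: reduced_energy_cell_dist.
Qed.

End cells.

Hypothesis normalJ : forall b (A : set R), measurable A ->
  P [set w | A (J w b)] = normal_prob 0 1 A.
Hypothesis cocycleE : forall w, cocycle (E w).

Lemma flex_small_event b (M delta : R) : 0 < delta ->
  exists C : set Omega, [/\ measurable C, pr P C <= normal_peak 1 * (2 * delta) &
    forall w, (forall i, `|coord i w| < M) -> `|flex (J w) (E w) b| <= delta -> C w].
Proof.
move=> delta0.
have [eta eta0 gap_osc] := small_mesh (n := #|{: other_coord b}|%:R) (ler0n _ _) delta0.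
have [N grid] := grid_size M eta0.
have /choice [c center] := cell_gap_center (b := b) (N := N) M eta.
exists (\big[setU/set0]_k
  (cell M eta k `&` [set w | `[c k / 2 - delta, c k / 2 + delta]%classic (J w b)])).
split.
- apply: bigsetU_measurable => k _; apply: measurableI; first exact: measurable_cell.
  exact: measurable_preimage (mJ b) (measurable_itv _).
- apply: (@pr_partition_near _ _ _ P _ (cell (N := N) M eta) (fun w => J w b)
           (fun k => c k / 2)).
  + exact: measurable_cell.
  + exact: cell_disjoint.
  + exact: mJ.
  + move=> k A mA; apply: (pr_coupling_indep (B := fun i => bin M eta (k i))) => // i.
    exact: measurable_bin.
  + move=> a; rewrite -lee_fin -prE; last exact: measurable_preimage (mJ b) (measurable_itv _).
    by rewrite (normalJ _ (measurable_itv _)) normal_prob_itv_le ?ltW.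
- move=> w wM flex_le; rewrite -bigcup_seq_cond.
  have kw := cell_cover (b := b) eta0 grid wM.
  exists [ffun i => bin_of M eta N (coord (val i) w)]; first by rewrite /= mem_index_enum.
  split => //=; rewrite in_itv /=.
  apply: center_half_itv (le_trans (center _ _ kw) gap_osc) _.
  by move: flex_le; rewrite (flexE _ _ (cocycleE w)) normr_id.
Qed.

End model.

Lemma edge_card_gt0 (d L : nat) : (0 < d)%N -> (0 < L)%N -> (0 < #|{: edge d L}|)%N.
Proof.
move=> d0 L0.
have lo : (0 < 2 * L + 1)%N by rewrite addn1.
have hi : (1 < 2 * L + 1)%N by rewrite addn1 ltnS muln_gt0.
pose i0 : 'I_d := Ordinal d0.
pose x : site d L := [ffun _ => Ordinal lo].
pose y : site d L := [ffun i => if i == i0 then Ordinal hi else Ordinal lo].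
have xy : adjb x y.
  apply/existsP; exists i0; rewrite !ffunE eqxx /=; apply/forallP => j.
  by apply/implyP => /negbTE ji0; rewrite !ffunE ji0.
have exy : [exists x', exists y', adjb x' y' && ([set x; y]%SET == [set x'; y']%SET)].
  by apply/existsP; exists x; apply/existsP; exists y; rewrite xy eqxx.
by apply/card_gt0P; exists (exist _ [set x; y]%SET exy).
Qed.

Unset Implicit Arguments.

Theorem lemma4p1 (R : realType) (d : nat) (hd : (0 < d)%N) (eps : R) (heps : 0 < eps) :
  exists delta : R, 0 < delta /\
  forall (L : nat), (0 < L)%N ->
  forall (dO : measure_display) (Omega : measurableType dO) (P : probability Omega R)
    (J : Omega -> edge d L -> R) (E : Omega -> SL d L -> SL d L -> R),
    (forall b, measurable_fun setT (fun w => J w b)) ->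
    (forall s s', measurable_fun setT (fun w => E w s s')) ->
    (forall b (A : set R), measurable A ->
        P [set w | A (J w b)] = normal_prob 0 1 A) ->
    indep_JE P J E ->
    (forall w, cocycle (E w)) ->
    exists Beps : set Omega,
      [/\ measurable Beps,
          ((1 - eps)%:E < P Beps)%E &
          forall w, Beps w ->
            (1 - eps) * (nedges d L)%:R < (nflex_gt delta (J w) (E w))%:R].
Proof.
pose peak := normal_peak (1 : R).
have peak0 : 0 < peak by apply: normal_peak_gt0; exact: oner_neq0.
pose delta := eps ^+ 2 / (4 * peak).
have delta0 : 0 < delta by rewrite divr_gt0 ?exprn_gt0 ?mulr_gt0.
exists delta; split => // L L0 dO Omega P J E mJ mE normalJ indepJE cocycleE.
have [M [_ M_tail]] := tail_bound P (measurable_coord mJ mE) (mulr_gt0 peak0 delta0).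
set good := [set w | forall i, `|coord J E i w| < M] in M_tail.
have mgood : measurable good.
  by apply: measurable_forall => i; apply/measurable_norm_lt/measurable_coord.
have /choice [C flexC] := fun b => flex_small_event mJ mE indepJE normalJ cocycleE b M delta0.
have mbad b : measurable (~` good `|` C b).
  by apply: measurableU; [exact: measurableC | case: (flexC b)].
have pr_bad b : pr P (~` good `|` C b) <= 3 * (peak * delta).
  have [mC prC _] := flexC b; apply: le_trans (prU2 P (measurableC mgood) mC) _.
  by rewrite /peak in M_tail *; lra.
have [|B [mB PB Bflex]] := few_occur_whp mbad (edge_card_gt0 hd L0) heps pr_bad.
  have -> : 3 * (peak * delta) = 3 / 4 * eps ^+ 2 by rewrite /delta; field; rewrite gt_eqF.
  by have := exprn_gt0 2 heps; lra.
exists B; split => // w /Bflex /lt_le_trans; apply; rewrite ler_nat.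
apply: subset_leq_card; apply/fintype.subsetP => b; rewrite !inE => /negP bad_w.
rewrite ltNge; apply/negP => flex_le; apply/bad_w/mem_set.
have [goodw|] := pselect (good w); last by left.
by right; case: (flexC b) => _ _; apply.
Qed.
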